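(* Let $G=(V,E)$ be a graph and let $U,U^*\subseteq V$ be dominating sets of $G$. For every vertex $v\in V\setminus(U\cup U^* )$ choose a neighbour $u_v\in U$ of $v$. Let $\tilde G$ be the graph obtained from $G$ by contracting the edges $vu_v$ for all $v\in V\setminus(U\cup U^* )$; explicitly, $V(\tilde G)=U\cup U^*$, where each $x\in U$ represents the set $B_x=\{x\}\cup\{v\in V\setminus(U\cup U^* ): u_v=x\}$ and each $x\in U^*\setminus U$ represents $B_x=\{x\}$, and two distinct vertices $x,y$ of $\tilde G$ are adjacent iff $G$ has an edge between $B_x$ and $B_y$. Let $\{S_1,\dots,S_k\}$ be any division of $\tilde G$. Then for every $i\in\{1,\dots,k\}$, the set $(U\setminus\mathrm{int}(S_i))\cup(U^*\cap S_i)$ is a dominating set of $G$.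
   Context: A dominating set of $G$ is a set $D\subseteq V$ such that every vertex of $G$ is in $D$ or has a neighbour in $D$. For a collection $\mathcal S=\{S_1,\dots,S_k\}$ of subsets of the vertex set of a graph $H$, the boundary of $S_i$ is $\partial S_i=S_i\cap\bigcup_{j\ne i}S_j$ and its interior is $\mathrm{int}(S_i)=S_i\setminus\partial S_i$. A division of $H$ is a collection $\{S_1,\dots,S_k\}$ of subsets of $V(H)$ such that (a) every vertex and every edge of $H$ belongs to some induced subgraph $H[S_i]$, and (b) for every $i$ and every $v\in\mathrm{int}(S_i)$, all neighbours of $v$ in $H$ lie in $S_i$. *)

From mathcomp Require Import all_boot.
Set Implicit Arguments. Unset Strict Implicit. Unset Printing Implicit Defensive.

Definition dominating (V : finType) (W : {set V}) (adj : rel V) (D : {set V}) : Prop :=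
  D \subset W /\
  forall v, v \in W -> v \in D \/ exists2 w, w \in D & adj v w.

Definition bdry (V : finType) (P : {set {set V}}) (S : {set V}) : {set V} :=
  S :&: \bigcup_(T in P | T != S) T.
Definition intr (V : finType) (P : {set {set V}}) (S : {set V}) : {set V} :=
  S :\: bdry P S.

Definition division (V : finType) (W : {set V}) (adj : rel V) (P : {set {set V}}) : Prop :=
  (forall S, S \in P -> S \subset W) /\
  (forall x, x \in W -> exists2 S, S \in P & x \in S) /\
  (forall x y, x \in W -> y \in W -> adj x y ->
     exists2 S, S \in P & (x \in S) && (y \in S)) /\
  (forall S v w, S \in P -> v \in intr P S -> w \in W -> adj v w -> w \in S).

Definition branch (V : finType) (U Us : {set V}) (u : V -> V) (x : V) : {set V} :=
  if x \in U then x |: [set v | (v \notin U :|: Us) && (u v == x)] else [set x].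

Definition contr_adj (V : finType) (e : rel V) (U Us : {set V}) (u : V -> V) : rel V :=
  fun x y => (x != y) &&
    [exists a in branch U Us u x, exists b in branch U Us u y, e a b].

From mathcomp Require Import all_boot.

Set Implicit Arguments.
Unset Strict Implicit.
Unset Printing Implicit Defensive.

(* A vertex x in the interior of S has all its contracted neighbours in S, so
   every edge of G leaving the branch set of x ends in the branch set of a
   vertex of S.  A vertex v of G is then dominated as follows: if v lies in
   U \ int S or is adjacent to such a vertex we are done; otherwise v, or its
   representative in U, is an interior vertex x of S, and the U*-vertex
   dominating v is either v itself or a G-neighbour of the branch set of x,
   hence lies in U* and in S. *)

Lemma branch_self (V : finType) (U Us : {set V}) (u : V -> V) (x : V) :
  x \in branch U Us u x.
Proof. by rewrite /branch; case: ifP => _; rewrite ?setU11 ?set11. Qed.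

Lemma mem_branch_rep (V : finType) (U Us : {set V}) (u : V -> V) (v : V) :
  v \notin U :|: Us -> u v \in U -> v \in branch U Us u (u v).
Proof.
by move=> vUUs uvU; rewrite /branch uvU; apply/setU1P; right; rewrite in_set vUUs eqxx.
Qed.

Lemma mem_intr (V : finType) (P : {set {set V}}) (S : {set V}) (x : V) :
  x \in intr P S -> x \in S.
Proof. by rewrite /intr in_setD => /andP[]. Qed.

Lemma division_intr_closed (V : finType) (W : {set V}) (adj : rel V)
    (P : {set {set V}}) (S : {set V}) (x y : V) :
  division W adj P -> S \in P -> x \in intr P S -> y \in W -> adj x y ->
  y \in S.
Proof. by case=> _ [_ [_ hclosed]]; exact: hclosed. Qed.

Lemma branch_rep_eq (V : finType) (U Us : {set V}) (u : V -> V) (x v : V) :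
  v \in branch U Us u x -> v \in U :|: Us -> v = x.
Proof.
rewrite /branch; case: ifP => _; last by rewrite inE => /eqP.
by case/setU1P=> [//|]; rewrite inE => /andP[/negbTE->].
Qed.

Section Domination.

Variables (V : finType) (e : rel V) (U Us : {set V}) (u : V -> V).
Variables (P : {set {set V}}) (S : {set V}).
Hypothesis e_sym : symmetric e.
Hypothesis hU : dominating [set: V] e U.
Hypothesis hUs : dominating [set: V] e Us.
Hypothesis hu : forall v, v \notin U :|: Us -> (u v \in U) && e v (u v).
Hypothesis hP : division (U :|: Us) (contr_adj e U Us u) P.
Hypothesis SP : S \in P.

Let D := (U :\: intr P S) :|: (Us :&: S).
Let dominated v := v \in D \/ exists2 w, w \in D & e v w.

Lemma intr_branch_edge (x y a b : V) :
  x \in intr P S -> y \in U :|: Us ->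
  a \in branch U Us u x -> b \in branch U Us u y -> e a b -> y \in S.
Proof.
move=> xi yW ax bY eab.
have [<-|nxy] := eqVneq x y; first exact: mem_intr xi.
apply: (division_intr_closed hP SP xi yW).
rewrite /contr_adj nxy; apply/existsP; exists a; rewrite ax.
by apply/existsP; exists b; rewrite bY.
Qed.

Lemma mem_dom_U (w : V) : w \in U -> w \notin intr P S -> w \in D.
Proof. by move=> wU wi; rewrite in_setU in_setD wi wU. Qed.

Lemma mem_dom_Us (w : V) : w \in Us -> w \in S -> w \in D.
Proof. by move=> wUs wS; rewrite in_setU in_setI wUs wS orbT. Qed.

Lemma dominated_branch_intr (x v : V) :
  x \in intr P S -> v \in branch U Us u x -> dominated v.
Proof.
move=> xi vx; case: (proj2 hUs v (in_setT v)) => [vUs|[w wUs evw]].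
  left; apply: mem_dom_Us => //.
  by rewrite (branch_rep_eq vx) ?(mem_intr xi) // in_setU vUs orbT.
right; exists w => //; apply: mem_dom_Us => //.
by apply: (intr_branch_edge xi _ vx (branch_self U Us u w) evw); rewrite in_setU wUs orbT.
Qed.

Lemma dominated_branch (x v : V) :
  x \in U -> v \in branch U Us u x -> dominated v.
Proof.
move=> xU vx; have [xi|xi] := boolP (x \in intr P S).
  exact: dominated_branch_intr xi vx.
have xD := mem_dom_U xU xi.
move: vx; rewrite /branch xU => /setU1P[->|]; first by left.
rewrite in_set => /andP[vUUs /eqP uvx]; right; exists x => //.
by rewrite -uvx (andP (hu vUUs)).2.
Qed.

Lemma dominated_Us (v : V) : v \in Us -> v \notin U -> dominated v.
Proof.
move=> vUs /negP vU; case: (proj2 hU v (in_setT v)) => [//|[w wU evw]].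
have [wi|wi] := boolP (w \in intr P S); last by right; exists w; rewrite ?mem_dom_U.
left; apply: mem_dom_Us => //.
apply: (intr_branch_edge wi _ (branch_self U Us u w) (branch_self U Us u v)).
  by rewrite inE vUs orbT.
by rewrite e_sym.
Qed.

Lemma dominated_all (v : V) : dominated v.
Proof.
have [vU|vU] := boolP (v \in U); first exact: dominated_branch vU (branch_self U Us u v).
have [vUs|vUs] := boolP (v \in Us); first exact: dominated_Us.
have vUUs : v \notin U :|: Us by rewrite inE negb_or vU vUs.
exact: dominated_branch (andP (hu vUUs)).1 (mem_branch_rep vUUs (andP (hu vUUs)).1).
Qed.

End Domination.

Theorem mainTheorem7 (V : finType) (e : rel V)
  (e_sym : symmetric e) (e_irr : irreflexive e)
  (U Us : {set V})
  (hU : dominating [set: V] e U) (hUs : dominating [set: V] e Us)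
  (u : V -> V)
  (hu : forall v, v \notin U :|: Us -> (u v \in U) && e v (u v))
  (P : {set {set V}})
  (hP : division (U :|: Us) (contr_adj e U Us u) P) :
  forall S, S \in P ->
    dominating [set: V] e ((U :\: intr P S) :|: (Us :&: S)).
Proof.
move=> S SP; split; first exact: subsetT.
by move=> v _; exact: dominated_all e_sym hU hUs hu hP SP v.
Qed.
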